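(* There is an absolute constant $c>0$ such that for every $n\ge4$ that is a power of $4$ and every positive definite $A\in\mathbb{R}^{n\times n}$, \[\operatorname{Tr}(A)\cdot\max_{1\le i\le n}(v^i)^TA^{-1}v^i\ \ge\ c\,n\lg^2 n,\] where $v^i\in\mathbb{R}^n$ has its first $i$ coordinates equal to $1$ and its last $n-i$ coordinates equal to $0$. Moreover, for every power of $2$, $n\ge4$, the matrix $A$ with $A_{ij}=\lg n-k$ ($k$ the smallest nonnegative integer with $\lfloor (i-1)/2^k\rfloor=\lfloor (j-1)/2^k\rfloor$) satisfies $\operatorname{Tr}(A)\cdot\max_i (v^i)^TA^{-1}v^i\le n\lg^2 n$.
   Context: $\lg$ is the base-2 logarithm. *)

From HB Require Import structures.
From mathcomp Require Import all_boot all_order all_algebra.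
Set Implicit Arguments. Unset Strict Implicit. Unset Printing Implicit Defensive.
Import Order.TTheory GRing.Theory Num.Theory.

Definition lg (n : nat) : nat := trunc_log 2 n.

Local Open Scope ring_scope.

Definition posdef (R : realFieldType) (n : nat) (A : 'M[R]_n) : Prop :=
  A^T = A /\ forall x : 'cV[R]_n, x != 0 -> 0 < (x^T *m A *m x) 0 0.

Definition vvec (R : realFieldType) (n k : nat) : 'cV[R]_n :=
  \col_(j < n) (if (j < k)%N then 1 else 0).

Definition maxquad (R : rcfType) (n : nat) (A : 'M[R]_n) : R :=
  \big[Num.max/0]_(i < n) ((vvec R n i.+1)^T *m invmx A *m vvec R n i.+1) 0 0.

Local Close Scope ring_scope.

Lemma ex_common_level (i j : nat) : exists k, i %/ 2 ^ k == j %/ 2 ^ k.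
Proof.
exists (i + j).
have Hi : i < 2 ^ (i + j) by apply: (leq_trans (ltn_expl i (ltnSn 1))); rewrite leq_exp2l // leq_addr.
have Hj : j < 2 ^ (i + j) by apply: (leq_trans (ltn_expl j (ltnSn 1))); rewrite leq_exp2l // leq_addl.
by rewrite !divn_small.
Qed.

(* smallest k >= 0 with floor(i/2^k) = floor(j/2^k) (0-indexed i, j) *)
Definition level (i j : nat) : nat := ex_minn (ex_common_level i j).

Local Open Scope ring_scope.
Definition treeMatrix (R : rcfType) (n : nat) : 'M[R]_n :=
  \matrix_(i < n, j < n) ((lg n - level i j)%N)%:R.

From HB Require Import structures.
From mathcomp Require Import all_boot all_order all_algebra.
From mathcomp Require Import zify ring lra.
Set Implicit Arguments. Unset Strict Implicit. Unset Printing Implicit Defensive.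
Import Order.TTheory GRing.Theory Num.Theory.

(* For positive definite A and any x, completing the square gives
   v^T A^-1 v >= 2 x^T v - x^T A x. Pair each prefix vector v^i with a test
   vector w_i: for every scale 2^k, 2^-k times the Haar function on the first
   half of the dyadic block of length 2^(k+2) containing i, signed so that it
   correlates positively with v^i; then sum_i <w_i, v^i> = n (lg n - 1) / 4.
   After summing over i, Haar functions of different scales are orthogonal,
   and those of scale 2^k have Gram kernel 2^(k+1) (P_k - P_(k+1)), P_k being
   the averaging over dyadic blocks of length 2^k; so the energies telescope to
   sum_i w_i^T A w_i <= 8 Tr A. Scaling the w_i optimally yields
   n max_i (v^i)^T A^-1 v^i >= (sum_i <w_i, v^i>)^2 / (8 Tr A).

   The tree matrix T is the sum over k < lg n of the 0/1 kernels
   of "same dyadic block of length 2^k", so x^T T x is the sum over levels and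
   blocks of the squared block sums of x. The prefix sum <v^p, x> telescopes
   over the levels, each step being one block sum, so by Cauchy-Schwarz
   <v^p, x>^2 <= lg n x^T T x. For x = T^-1 v^p both sides are expressed by
   q = (v^p)^T T^-1 v^p, whence q <= lg n, while Tr T = n lg n. *)

Lemma divnMD_small D P r : r < D -> (P * D + r) %/ D = P.
Proof. by move=> rD; rewrite divnMDl ?divn_small ?addn0 //; case: D rD. Qed.

Lemma divnMAD q a d r : 0 < d -> (q * (a * d) + r) %/ d = q * a + r %/ d.
Proof. by move=> d0; rewrite mulnA divnMDl. Qed.

Lemma odd_mul_evenD d P x : ~~ odd d -> odd (P * d + x) = odd x.
Proof. by move=> /negbTE d_even; rewrite oddD oddM d_even andbF. Qed.

Lemma eqn_halfE J L : J./2 = L./2 -> (J == L) = (odd J == odd L).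
Proof.
move=> H; rewrite -{1}(odd_double_half J) -{1}(odd_double_half L) H.
by rewrite eqn_add2r; case: (odd J); case: (odd L).
Qed.

Lemma ltn_halfE J Q : (J < Q) = (J %/ 2 < Q %/ 2) + odd Q * (J == Q.-1) :> nat.
Proof.
move: (odd_double_half J) (odd_double_half Q); rewrite -!divn2.
case: (odd J); case: (odd Q) => /= hJ hQ;
case: ltnP => h1; case: ltnP => h2; case: eqP => h3 /=; lia.
Qed.

Lemma mul4_exp2 k : 4 * 2 ^ k = 2 ^ k.+2.
Proof. by rewrite !expnS mulnA. Qed.

Lemma sum_nat_leq l M : \sum_(0 <= k < M) (l <= k) = M - l.
Proof.
elim: M => [|M IH]; first by rewrite big_geq.
by rewrite big_nat_recr //= IH; case: (leqP l M) => H /=; lia.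
Qed.

Local Open Scope ring_scope.

Section NatSums.
Variable V : zmodType.

Lemma sumr_nat_blocks N D (F : nat -> V) :
  \sum_(0 <= i < N * D) F i = \sum_(0 <= P < N) \sum_(0 <= r < D) F (P * D + r)%N.
Proof.
rewrite big_nat_mul; apply: eq_bigr => P _.
rewrite -{1}[(P * D)%N]add0n big_addn mulSn addnK.
by apply: eq_bigr => r _; rewrite addnC.
Qed.

Lemma sumr_telescope (f : nat -> V) M :
  \sum_(0 <= k < M) (f k - f k.+1) = f 0%N - f M.
Proof.
by rewrite (@telescope_sumr_eq _ 0 M (fun k => - f k)) // => [|k _]; rewrite opprK addrC.
Qed.

Lemma sumr_nat_only M k (X : nat -> V) : (k < M)%N ->
  (forall k', (k' < M)%N -> k' != k -> X k' = 0) -> \sum_(0 <= k' < M) X k' = X k.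
Proof.
move=> kM X0; rewrite (bigD1_seq k) ?mem_index_iota ?iota_uniq //= big1_seq ?addr0 //.
by move=> k' /andP[ne]; rewrite mem_index_iota => /andP[_ k'M]; exact: X0.
Qed.

End NatSums.

Lemma sqr_sumr_le (R : realFieldType) M (d : nat -> R) :
  (\sum_(0 <= k < M) d k) ^+ 2 <= M%:R * \sum_(0 <= k < M) d k ^+ 2.
Proof.
have : 0 <= \sum_(0 <= k < M) \sum_(0 <= l < M) (d k - d l) ^+ 2.
  by do 2!(apply: sumr_ge0 => ? _); rewrite sqr_ge0.
have sqrB (a b : R) : (a - b) ^+ 2 = a ^+ 2 + b ^+ 2 - 2 * (a * b) by ring.
under eq_bigr => k _ do under eq_bigr => l _ do rewrite sqrB.
under eq_bigr => k _ do rewrite sumrB big_split /= sumr_const_nat subn0 -mulr_sumr.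
rewrite sumrB big_split /= sumr_const_nat subn0 -mulr_sumr -big_distrlr /=.
rewrite sumrMnl -[(\sum_(0 <= i < M) d i ^+ 2) *+ M]mulr_natl -expr2; lra.
Qed.

Lemma ler_sum_nat_term (R : numDomainType) N i (f : nat -> R) : (i < N)%N ->
  (forall b, 0 <= f b) -> f i <= \sum_(0 <= b < N) f b.
Proof.
move=> iN f_ge0; rewrite big_mkord (bigD1 (Ordinal iN)) //= lerDl.
by apply: sumr_ge0 => b _.
Qed.

Lemma trmx11 (R : Type) (M : 'M[R]_1) : M^T 0 0 = M 0 0.
Proof. by rewrite mxE. Qed.

Section QuadraticForm.
Variables (R : rcfType) (n : nat) (A : 'M[R]_n).

Definition bform (x y : nat -> R) : R := \sum_(j < n) \sum_(l < n) x j * A j l * y l.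
Definition qform (x : nat -> R) : R := bform x x.
Definition colfun (x : nat -> R) : 'cV[R]_n := \col_(j < n) x j.

Lemma mxquadE (X : 'cV[R]_n) :
  (X^T *m A *m X) 0 0 = \sum_(j < n) \sum_(l < n) X j 0 * A j l * X l 0.
Proof.
rewrite mxE exchange_big; apply: eq_bigr => l _.
by rewrite !mxE big_distrl /=; apply: eq_bigr => j _; rewrite !mxE.
Qed.

Lemma qformE x : qform x = ((colfun x)^T *m A *m colfun x) 0 0.
Proof. by rewrite mxquadE; do 2!(apply: eq_bigr => ? _); rewrite !mxE. Qed.

Lemma bform_suml I (r : seq I) (f : I -> nat -> R) g :
  bform (fun j => \sum_(k <- r) f k j) g = \sum_(k <- r) bform (f k) g.
Proof.
rewrite /bform; under eq_bigr => j _ do under eq_bigr => l _ do rewrite !mulr_suml.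
by under eq_bigr => j _ do rewrite exchange_big; rewrite exchange_big.
Qed.

Lemma bform_sumr I (r : seq I) (f : I -> nat -> R) g :
  bform g (fun j => \sum_(k <- r) f k j) = \sum_(k <- r) bform g (f k).
Proof.
rewrite /bform; under eq_bigr => j _ do under eq_bigr => l _ do rewrite !mulr_sumr.
by under eq_bigr => j _ do rewrite exchange_big; rewrite exchange_big.
Qed.

Lemma bformZ c d f g :
  bform (fun j => c * f j) (fun j => d * g j) = c * d * bform f g.
Proof.
rewrite /bform mulr_sumr; apply: eq_bigr => j _; rewrite mulr_sumr.
by apply: eq_bigr => l _; ring.
Qed.

Lemma qformZ c f : qform (fun j => c * f j) = c ^+ 2 * qform f.
Proof. by rewrite /qform bformZ expr2. Qed.

Lemma bformC f g : A^T = A -> bform f g = bform g f.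
Proof.
move=> AT; rewrite /bform exchange_big; do 2!(apply: eq_bigr => ? _).
by rewrite -{1}AT mxE; ring.
Qed.

Lemma sum_qformE I (r : seq I) (f : I -> nat -> R) :
  \sum_(c <- r) qform (f c) =
  \sum_(j < n) \sum_(l < n) A j l * \sum_(c <- r) f c j * f c l.
Proof.
rewrite /qform /bform exchange_big; apply: eq_bigr => j _.
rewrite exchange_big; apply: eq_bigr => l _.
by rewrite mulr_sumr; apply: eq_bigr => c _; ring.
Qed.

Hypothesis posA : posdef A.

Lemma posdef_mxquad_ge0 (X : 'cV[R]_n) : 0 <= (X^T *m A *m X) 0 0.
Proof.
have [->|nz] := eqVneq X 0; first by rewrite mulmx0 mxE.
exact: ltW (posA.2 _ nz).
Qed.

Lemma qform_ge0 x : 0 <= qform x.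
Proof. by rewrite qformE posdef_mxquad_ge0. Qed.

Lemma posdef_unitmx : A \in unitmx.
Proof.
rewrite -row_free_unit -kermx_eq0; apply/negPn/negP => nz.
have [i Hi] : exists i, row i (kermx A) != 0.
  apply/existsP; move: nz; apply: contraR; rewrite negb_exists => /forallP H.
  by apply/eqP/row_matrixP => i; rewrite row0; apply/eqP/negPn.
have uA : row i (kermx A) *m A = 0 by apply/sub_kermxP; exact: row_sub.
have := posA.2 ((row i (kermx A))^T); rewrite trmx_eq0 => /(_ Hi).
by rewrite trmxK uA mul0mx mxE ltxx.
Qed.

Lemma posdef_diag_gt0 (i : 'I_n) : 0 < A i i.
Proof.
have nz : delta_mx i (0 : 'I_1) != 0 :> 'cV[R]_n.
  by apply/negP => /eqP /matrixP /(_ i 0); rewrite !mxE !eqxx => /eqP; rewrite oner_eq0.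
by have := posA.2 _ nz; rewrite trmx_delta -rowE -colE !mxE.
Qed.

Lemma posdef_mxtrace_gt0 : (0 < n)%N -> 0 < \tr A.
Proof.
move=> n0; rewrite /mxtrace (bigD1 (Ordinal n0)) //=.
by rewrite ltr_pwDl ?posdef_diag_gt0 // sumr_ge0 // => i _; rewrite ltW ?posdef_diag_gt0.
Qed.

(* The minimum of [x |-> x^T A x - 2 x^T v] is attained at [x = A^-1 v]. *)
Lemma invmx_quad_ge (v X : 'cV[R]_n) :
  2 * (X^T *m v) 0 0 - (X^T *m A *m X) 0 0 <= (v^T *m invmx A *m v) 0 0.
Proof.
set Z := invmx A *m v.
have AZ : A *m Z = v by rewrite /Z mulmxA mulmxV ?mul1mx // posdef_unitmx.
have e1 : X^T *m A *m Z = X^T *m v by rewrite -mulmxA AZ.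
have e2 : (Z^T *m A *m X) 0 0 = (X^T *m v) 0 0.
  by rewrite -trmx11 !trmx_mul !trmxK posA.1 -/Z AZ.
have e3 : (Z^T *m A *m Z) 0 0 = (v^T *m invmx A *m v) 0 0.
  by rewrite -mulmxA AZ -trmx11 trmx_mul trmxK /Z mulmxA.
have := posdef_mxquad_ge0 (X - Z).
rewrite (raddfB (@trmx R n 1)) /= !mulmxBl !mulmxBr e1 !mxE.
move: e2 e3; rewrite !mxE => -> ->; lra.
Qed.

End QuadraticForm.

Section TestVectors.
Variables (R : rcfType) (n : nat).

Lemma colfun_vvec_dot (x : nat -> R) p : (p <= n)%N ->
  ((colfun n x)^T *m vvec R n p) 0 0 = \sum_(0 <= j < p) x j.
Proof.
move=> pn; rewrite mxE.
transitivity (\sum_(0 <= j < n) (if (j < p)%N then x j else 0)).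
  rewrite big_mkord; apply: eq_bigr => j _; rewrite !mxE.
  by case: ifP; rewrite ?mulr1 ?mulr0.
rewrite (big_cat_nat (leq0n p) pn) /=.
have -> : \sum_(p <= j < n) (if (j < p)%N then x j else 0) = 0.
  by rewrite big_nat_cond big1 // => j /andP[/andP[pj _] _]; rewrite ltnNge pj.
by rewrite addr0; apply: eq_big_nat => j /andP[_ ->].
Qed.

Variable A : 'M[R]_n.

Lemma quad_le_maxquad (i : 'I_n) :
  ((vvec R n i.+1)^T *m invmx A *m vvec R n i.+1) 0 0 <= maxquad A.
Proof. by rewrite /maxquad (bigD1 i) //= le_max lexx. Qed.

Hypothesis posA : posdef A.
Variable w : nat -> nat -> R.
Let S := \sum_(0 <= i < n) \sum_(0 <= j < i.+1) w i j.
Let E := \sum_(0 <= i < n) qform A (w i).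

Lemma maxquad_ge_test_vectors l : 2 * l * S - l ^+ 2 * E <= n%:R * maxquad A.
Proof.
have -> : n%:R * maxquad A = \sum_(0 <= i < n) maxquad A.
  by rewrite sumr_const_nat subn0 mulr_natl.
rewrite /S /E mulr_sumr mulr_sumr -sumrB big_mkord [X in _ <= X]big_mkord.
apply: ler_sum => i _; apply: le_trans (quad_le_maxquad i).
have := invmx_quad_ge posA (vvec R n i.+1) (colfun n (fun j => l * w i j)).
by rewrite -qformE qformZ colfun_vvec_dot // -mulr_sumr mulrA.
Qed.

Lemma test_vectors_bound K : (0 < n)%N -> 0 < K -> E <= K * \tr A ->
  S ^+ 2 <= K * n%:R * (\tr A * maxquad A).
Proof.
move=> n0 K0 EK; set T := \tr A; set l := S / (K * T).
have T0 : 0 < T by exact: posdef_mxtrace_gt0.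
have KT0 : 0 < K * T by rewrite mulr_gt0.
have lE : l ^+ 2 * E <= l ^+ 2 * (K * T) by rewrite ler_wpM2l ?sqr_ge0.
have lS : 2 * l * S = S ^+ 2 / (K * T) + l ^+ 2 * (K * T).
  by rewrite /l; field; rewrite !lt0r_neq0.
have := maxquad_ge_test_vectors l; rewrite lS => lmax.
have -> : K * n%:R * (T * maxquad A) = n%:R * maxquad A * (K * T) by ring.
by rewrite -ler_pdivrMr //; lra.
Qed.

End TestVectors.

Section Haar.
Variable R : rcfType.

Definition sgn (b : bool) : R := if b then -1 else 1.

Lemma sgn_mul b : sgn b * sgn b = 1.
Proof. by case: b; rewrite /sgn ?mulrNN mulr1. Qed.

Definition haar (B c j : nat) : R :=
  if (j %/ (2 * B) == c)%N then sgn (odd (j %/ B)) else 0.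

Lemma sum_sgn_halves B : (0 < B)%N -> \sum_(0 <= r < 2 * B) sgn (odd (r %/ B)) = 0.
Proof.
move=> B0; rewrite sumr_nat_blocks big_nat_recr //= big_nat1.
rewrite (@eq_big_nat _ _ _ 0 B _ (fun _ => sgn false)); last first.
  by move=> r /andP[_ rB]; rewrite divnMD_small.
rewrite [X in _ + X](@eq_big_nat _ _ _ 0 B _ (fun _ => sgn true)); last first.
  by move=> r /andP[_ rB]; rewrite divnMD_small.
by rewrite !sumr_const_nat /sgn -mulrnDl addrN mul0rn.
Qed.

Lemma sum_sgn_first_half B u : (u <= B)%N -> \sum_(0 <= r < u) sgn (odd (r %/ B)) = u%:R.
Proof.
move=> uB; rewrite (@eq_big_nat _ _ _ 0 u _ (fun _ => 1)) ?sumr_const_nat ?subn0 //.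
by move=> r /andP[_ ru]; rewrite divn_small //; apply: leq_trans ru uB.
Qed.

Lemma sum_sgn_second_half B u : (u <= B)%N ->
  \sum_(0 <= r < B + u) sgn (odd (r %/ B)) = B%:R - u%:R.
Proof.
move=> uB; rewrite (big_cat_nat (leq0n B) (leq_addr u B)) /= sum_sgn_first_half //.
rewrite -[in X in _ + X](add0n B) big_addn addKn (@eq_big_nat _ _ _ 0 u _ (fun _ => -1)).
  by rewrite sumr_const_nat subn0 -mulNrn.
by move=> r /andP[_ ru]; rewrite addnC -{1}(mul1n B) divnMD_small //; apply: leq_trans ru uB.
Qed.

(* The prefix sums of one Haar wave form a tent of height [B] over [2 B] points. *)
Lemma sum_sgn_prefix_sums B : (0 < B)%N ->
  \sum_(0 <= s < 2 * B) \sum_(0 <= r < s.+1) sgn (odd (r %/ B)) = (B * B)%:R.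
Proof.
move=> B0; rewrite sumr_nat_blocks big_nat_recr //= big_nat1.
rewrite (@eq_big_nat _ _ _ 0 B _ (fun u => u.+1%:R)); last first.
  by move=> u /andP[_ uB]; rewrite mul0n add0n sum_sgn_first_half.
rewrite [X in _ + X](@eq_big_nat _ _ _ 0 B _ (fun u => B%:R - u.+1%:R)); last first.
  by move=> u /andP[_ uB]; rewrite mul1n -addnS sum_sgn_second_half.
rewrite -big_split /= (@eq_big_nat _ _ _ 0 B _ (fun u => B%:R)); last first.
  by move=> u _; rewrite addrC subrK.
by rewrite sumr_const_nat subn0 natrM mulr_natr.
Qed.

Lemma haar0E B v : (0 < B)%N -> haar B 0 v = if (v < 2 * B)%N then sgn (odd (v %/ B)) else 0.
Proof. by move=> B0; rewrite /haar eqn0Ngt divn_gt0 ?muln_gt0 // -ltnNge. Qed.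

Lemma haar_shift B P v : (0 < B)%N -> haar B (2 * P) (P * (4 * B) + v) = haar B 0 v.
Proof.
move=> B0; have e4 : (4 * B = 2 * (2 * B))%N by rewrite mulnA.
rewrite /haar (@divnMAD P 4 B v) // odd_mul_evenD // e4.
rewrite (@divnMAD P 2 (2 * B) v) ?muln_gt0 //.
by rewrite [(P * 2)%N]mulnC -{2}[(2 * P)%N]addn0 eqn_add2l.
Qed.

Lemma haar_block_correlation B : (0 < B)%N ->
  \sum_(0 <= r < 4 * B) sgn (odd (r %/ (2 * B))) * \sum_(0 <= v < r.+1) haar B 0 v =
  (B * B)%:R.
Proof.
move=> B0; have B2 : (0 < 2 * B)%N by rewrite muln_gt0.
rewrite (_ : (4 * B = 2 * (2 * B))%N); last by rewrite mulnA.
rewrite sumr_nat_blocks big_nat_recr //= big_nat1.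
rewrite (@eq_big_nat _ _ _ 0 (2 * B) _
   (fun s => \sum_(0 <= r < s.+1) sgn (odd (r %/ B)))); last first.
  move=> s /andP[_ sB]; rewrite mul0n add0n divn_small // mul1r.
  by apply: eq_big_nat => v /andP[_ vs]; rewrite haar0E // (leq_trans vs sB).
rewrite sum_sgn_prefix_sums // [X in _ + X]big1_seq ?addr0 //.
move=> s /andP[_]; rewrite mem_index_iota => /andP[_ sB].
rewrite divnMD_small // mul1n -addnS (big_cat_nat (leq0n _) (leq_addr _ _)) /=.
rewrite (@eq_big_nat _ _ _ 0 (2 * B) _ (fun v => sgn (odd (v %/ B)))); last first.
  by move=> v /andP[_ vB]; rewrite haar0E ?vB.
rewrite sum_sgn_halves // add0r big_nat_cond big1 ?mulr0 //.
by move=> v /andP[/andP[vB _] _]; rewrite haar0E // ltnNge vB.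
Qed.

Lemma sum_haar_correlation B N : (0 < B)%N ->
  \sum_(0 <= i < N * (4 * B)) sgn (odd (i %/ (2 * B))) *
      \sum_(0 <= j < i.+1) haar B (2 * (i %/ (4 * B))) j = (N * (B * B))%:R.
Proof.
move=> B0; have B4 : (0 < 4 * B)%N by rewrite muln_gt0.
have e4 : (4 * B = 2 * (2 * B))%N by rewrite mulnA.
rewrite sumr_nat_blocks (@eq_big_nat _ _ _ 0 N _ (fun _ => (B * B)%:R)); last first.
  move=> P _; rewrite -(haar_block_correlation B0); apply: eq_big_nat => r /andP[_ rB].
  rewrite divnMD_small // {1}e4 divnMAD ?muln_gt0 // odd_mul_evenD //; congr (_ * _).
  rewrite -addnS (big_cat_nat (leq0n _) (leq_addr _ _)) /= big_nat_cond big1 ?add0r.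
    rewrite -[in X in X = _](add0n (P * (4 * B))%N) big_addn addKn.
    by apply: eq_big_nat => v _; rewrite addnC haar_shift.
  move=> j /andP[/andP[_ jP] _]; rewrite /haar ifN //.
  by rewrite neq_ltn ltn_divLR ?muln_gt0 //; apply/orP; left; nia.
by rewrite sumr_const_nat subn0 -mulrnA mulnC.
Qed.

Lemma sum_sgn_block_const N B (F : nat -> R) : (0 < B)%N ->
  \sum_(0 <= i < N * (4 * B)) sgn (odd (i %/ (2 * B))) * F (i %/ (4 * B))%N = 0.
Proof.
move=> B0; have e4 : (4 * B = 2 * (2 * B))%N by rewrite mulnA.
rewrite sumr_nat_blocks big1_seq // => P _.
rewrite (@eq_big_nat _ _ _ 0 (4 * B) _ (fun r => F P * sgn (odd (r %/ (2 * B))))).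
  by rewrite -mulr_sumr e4 sum_sgn_halves ?mulr0 // muln_gt0.
move=> r /andP[_ rB]; rewrite divnMD_small // {1}e4.
by rewrite divnMAD ?muln_gt0 // odd_mul_evenD // mulrC.
Qed.

Lemma sum_haar_mul B M j l : (0 < B)%N -> (j < M * (2 * B))%N ->
  \sum_(0 <= c < M) haar B c j * haar B c l =
  2 * ((j %/ B == l %/ B)%N : nat)%:R - ((j %/ (2 * B) == l %/ (2 * B))%N : nat)%:R.
Proof.
move=> B0 jM; have jcM : (j %/ (2 * B) < M)%N by rewrite ltn_divLR // muln_gt0.
rewrite (sumr_nat_only jcM); last by move=> c _; rewrite /haar eq_sym => /negbTE ->; rewrite mul0r.
rewrite /haar eqxx eq_sym !(mulnC 2 B) !divnMA !divn2.
have [E|NE] := eqVneq (j %/ B)./2 (l %/ B)./2.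
  rewrite (eqn_halfE E).
  by case: (odd (j %/ B)); case: (odd (l %/ B)); rewrite /sgn /=; lra.
rewrite mulr0 subr0; case: eqVneq => [E|_]; last by rewrite mulr0.
by move: NE; rewrite E eqxx.
Qed.

Definition testv_term (k i j : nat) : R :=
  (2 ^ k)%:R^-1 * sgn (odd (i %/ (2 * 2 ^ k))) * haar (2 ^ k) (2 * (i %/ (4 * 2 ^ k))) j.

Definition testv (m i j : nat) : R := \sum_(0 <= k < m.-1) testv_term k i j.

Lemma sum_testv_prefix m : (2 <= m)%N ->
  \sum_(0 <= i < 2 ^ m) \sum_(0 <= j < i.+1) testv m i j = (m.-1 * 2 ^ (m - 2))%:R.
Proof.
move=> m2; rewrite /testv /testv_term; under eq_bigr => i _ do rewrite exchange_big_nat.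
rewrite exchange_big_nat /= (@eq_big_nat _ _ _ 0 m.-1 _ (fun _ => (2 ^ (m - 2))%:R)).
  by rewrite sumr_const_nat subn0 -mulrnA mulnC.
move=> k /andP[_ km]; have p0 : (0 < 2 ^ k)%N by rewrite expn_gt0.
have e : (2 ^ m = 2 ^ (m - k.+2) * (4 * 2 ^ k))%N.
  by rewrite mul4_exp2 -expnD subnK //; lia.
under eq_bigr => i _ do under eq_bigr => j _ do rewrite -mulrA.
under eq_bigr => i _ do rewrite -!mulr_sumr.
rewrite -mulr_sumr e sum_haar_correlation // mulnA natrM mulrC -mulrA mulfV ?pnatr_eq0 -?lt0n //.
by rewrite mulr1 -expnD; congr (2 ^ _)%:R; lia.
Qed.

End Haar.

Section TestVectorEnergy.
Variables (R : rcfType) (m : nat) (A : 'M[R]_(2 ^ m)).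
Hypothesis symA : A^T = A.

Lemma testv_terms_orth k k' : (k < k')%N -> (k' < m.-1)%N ->
  \sum_(0 <= i < 2 ^ m) bform A (testv_term R k i) (testv_term R k' i) = 0.
Proof.
move=> kk' k'm; have p0 : (0 < 2 ^ k)%N by rewrite expn_gt0.
have e : (2 ^ m = 2 ^ (m - k.+2) * (4 * 2 ^ k))%N.
  by rewrite mul4_exp2 -expnD subnK //; lia.
have e1 i : (i %/ (2 * 2 ^ k') = i %/ (4 * 2 ^ k) %/ 2 ^ (k' - k.+1))%N.
  by rewrite -divnMA mul4_exp2 -expnS -expnD; congr (_ %/ 2 ^ _)%N; lia.
have e2 i : (i %/ (4 * 2 ^ k') = i %/ (4 * 2 ^ k) %/ 2 ^ (k' - k))%N.
  by rewrite -divnMA !mul4_exp2 -expnD; congr (_ %/ 2 ^ _)%N; lia.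
(* within a block of length [2^(k+2)], only the sign of the scale-[2^k] term varies *)
rewrite -[RHS](sum_sgn_block_const (2 ^ (m - k.+2)) (fun P =>
   (2 ^ k)%:R^-1 * (2 ^ k')%:R^-1 * sgn R (odd (P %/ 2 ^ (k' - k.+1))) *
   bform A (haar R (2 ^ k) (2 * P)) (haar R (2 ^ k') (2 * (P %/ 2 ^ (k' - k))))) p0) -e.
by apply: eq_bigr => i _; rewrite /testv_term bformZ e1 e2; ring.
Qed.

Lemma testv_term_energy k : (k < m.-1)%N ->
  \sum_(0 <= i < 2 ^ m) bform A (testv_term R k i) (testv_term R k i) =
  4 / (2 ^ k)%:R * \sum_(0 <= P < 2 ^ (m - k.+2)) qform A (haar R (2 ^ k) (2 * P)).
Proof.
move=> km; have p0 : (0 < 2 ^ k)%N by rewrite expn_gt0.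
have e : (2 ^ m = 2 ^ (m - k.+2) * (4 * 2 ^ k))%N.
  by rewrite mul4_exp2 -expnD subnK //; lia.
have := sumr_nat_blocks (2 ^ (m - k.+2)) (4 * 2 ^ k)
  (fun i => bform A (testv_term R k i) (testv_term R k i)).
rewrite -e => ->; rewrite mulr_sumr; apply: eq_bigr => P _.
rewrite (@eq_big_nat _ _ _ 0 (4 * 2 ^ k) _
    (fun _ => (2 ^ k)%:R^-1 ^+ 2 * qform A (haar R (2 ^ k) (2 * P)))).
  rewrite sumr_const_nat subn0 -(mulr_natr (_ * qform A _) (4 * 2 ^ k)) natrM.
  by field; rewrite pnatr_eq0 -lt0n.
move=> r /andP[_ rB]; rewrite /testv_term bformZ divnMD_small ?muln_gt0 // /qform.
by rewrite -[X in _ = X * _]mulr1 -(sgn_mul R (odd ((P * (4 * 2 ^ k) + r) %/ (2 * 2 ^ k)))); ring.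
Qed.

Lemma testv_energyE :
  \sum_(0 <= i < 2 ^ m) qform A (testv R m i) =
  \sum_(0 <= k < m.-1) \sum_(0 <= i < 2 ^ m) bform A (testv_term R k i) (testv_term R k i).
Proof.
under eq_bigr => i _ do rewrite /qform /testv bform_suml.
under eq_bigr => i _ do under eq_bigr => k _ do rewrite bform_sumr.
rewrite exchange_big_nat; apply: eq_big_nat => k /andP[_ km].
rewrite exchange_big_nat /= (sumr_nat_only km) // => k' k'm neq.
case: (ltngtP k k') => [lt|gt|eq]; last by rewrite eq eqxx in neq.
  by rewrite testv_terms_orth.
by under eq_bigr => i _ do rewrite bformC //; rewrite testv_terms_orth.
Qed.

Hypothesis posA : posdef A.

Definition haar_energy k := \sum_(0 <= c < 2 ^ (m - k.+1)) qform A (haar R (2 ^ k) c).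

Lemma haar_energy_ge0 k : 0 <= haar_energy k.
Proof. by apply: sumr_ge0 => c _; apply: qform_ge0. Qed.

Definition block_avg (k j l : nat) : R :=
  ((j %/ 2 ^ k == l %/ 2 ^ k)%N : nat)%:R / (2 ^ k)%:R.

Lemma haar_energyE k : (k < m)%N ->
  haar_energy k / (2 * (2 ^ k)%:R) =
  \sum_(j < 2 ^ m) \sum_(l < 2 ^ m) A j l * (block_avg k j l - block_avg k.+1 j l).
Proof.
move=> km; rewrite /haar_energy sum_qformE mulr_suml; apply: eq_bigr => j _.
rewrite mulr_suml; apply: eq_bigr => l _.
have p0 : (0 < 2 ^ k)%N by rewrite expn_gt0.
rewrite sum_haar_mul // -?expnS -?expnD ?subnK // /block_avg -mulrA; congr (_ * _).
by rewrite expnS natrM; field; rewrite pnatr_eq0 -lt0n.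
Qed.

Lemma sum_haar_energy :
  \sum_(0 <= k < m) haar_energy k / (2 * (2 ^ k)%:R) =
  \tr A - qform A (fun _ => 1) / (2 ^ m)%:R.
Proof.
rewrite (@eq_big_nat _ _ _ 0 m _ (fun k => \sum_(j < 2 ^ m) \sum_(l < 2 ^ m)
    A j l * (block_avg k j l - block_avg k.+1 j l))); last first.
  by move=> k /andP[_ km]; rewrite haar_energyE.
rewrite exchange_big /= /mxtrace /qform /bform mulr_suml -sumrB; apply: eq_bigr => j _.
rewrite exchange_big /=; under eq_bigr => l _ do rewrite -mulr_sumr sumr_telescope.
have avg0 (l : 'I_(2 ^ m)) : block_avg 0 j l = ((j == l) : nat)%:R.
  by rewrite /block_avg expn0 !divn1 divr1.
have avgm (l : 'I_(2 ^ m)) : block_avg m j l = (2 ^ m)%:R^-1.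
  by rewrite /block_avg !divn_small ?ltn_ord // eqxx mul1r.
under eq_bigr => l _ do rewrite avg0 avgm mulrBr.
rewrite sumrB -mulr_suml; congr (_ - _); last first.
  by congr (_ * _); apply: eq_bigr => l _; rewrite mul1r mulr1.
rewrite (bigD1 j) //= eqxx mulr1 big1 ?addr0 // => l.
by rewrite eq_sym => /negbTE ->; rewrite mulr0.
Qed.

Lemma sum_haar_energy_even k : (k < m.-1)%N ->
  \sum_(0 <= P < 2 ^ (m - k.+2)) qform A (haar R (2 ^ k) (2 * P)) <= haar_energy k.
Proof.
move=> km; rewrite /haar_energy (_ : (2 ^ (m - k.+1) = 2 ^ (m - k.+2) * 2)%N); last first.
  by rewrite -expnSr; congr (2 ^ _)%N; lia.
rewrite sumr_nat_blocks; apply: ler_sum => P _.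
rewrite big_nat_recr //= big_nat1 addn0 mulnC addn1.
by rewrite lerDl; apply: qform_ge0.
Qed.

Lemma testv_energy : \sum_(0 <= i < 2 ^ m) qform A (testv R m i) <= 8 * \tr A.
Proof.
have c_ge0 k : 0 <= 4 / (2 ^ k)%:R :> R by rewrite divr_ge0.
rewrite testv_energyE (@eq_big_nat _ _ _ 0 m.-1 _ (fun k => 4 / (2 ^ k)%:R *
   \sum_(0 <= P < 2 ^ (m - k.+2)) qform A (haar R (2 ^ k) (2 * P)))); last first.
  by move=> k /andP[_ km]; rewrite testv_term_energy.
apply: le_trans (_ : \sum_(0 <= k < m.-1) 4 / (2 ^ k)%:R * haar_energy k <= _).
  by apply: ler_sum_nat => k /andP[_ km]; rewrite ler_wpM2l ?sum_haar_energy_even.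
apply: le_trans (_ : \sum_(0 <= k < m) 4 / (2 ^ k)%:R * haar_energy k <= _).
  rewrite [X in _ <= X](big_cat_nat (leq0n _) (leq_pred m)) /= lerDl.
  by apply: sumr_ge0 => k _; rewrite mulr_ge0 ?haar_energy_ge0.
have -> : \sum_(0 <= k < m) 4 / (2 ^ k)%:R * haar_energy k =
    8 * \sum_(0 <= k < m) haar_energy k / (2 * (2 ^ k)%:R).
  by rewrite mulr_sumr; apply: eq_bigr => k _; field; rewrite pnatr_eq0 -lt0n expn_gt0.
by rewrite sum_haar_energy ler_pM2l // gerBl divr_ge0 ?qform_ge0.
Qed.

End TestVectorEnergy.

Lemma tr_mul_maxquad_ge (R : rcfType) m (A : 'M[R]_(2 ^ m)) : (2 <= m)%N -> posdef A ->
  (512 : R)^-1 * (2 ^ m * m ^ 2)%N%:R <= \tr A * maxquad A.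
Proof.
move=> m2 posA; have n0 : (0 < 2 ^ m)%N by rewrite expn_gt0.
have := test_vectors_bound posA n0 (ltr0Sn _ 7) (testv_energy posA.1 posA).
have e4 : (2 ^ m = 4 * 2 ^ (m - 2))%N by rewrite mul4_exp2; congr (2 ^ _)%N; lia.
set T := \tr A * maxquad A; rewrite sum_testv_prefix // e4 !natrM !natrX ler_pdivrMl //.
set P : R := 2 ^+ (m - 2); set M : R := m%:R; set M1 : R := m.-1%:R.
have P0 : 0 < P by rewrite exprn_gt0.
have MM1 : M ^+ 2 <= 4 * M1 ^+ 2.
  have : M <= 2 * M1 by rewrite -natrM ler_nat; lia.
  have : 0 <= M by [].
  nra.
move=> H; have : M1 ^+ 2 * P <= 32 * T.
  by rewrite -(ler_pM2r P0); move: H; rewrite exprMn; nra.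
by nra.
Qed.

Local Close Scope ring_scope.

Lemma level_leqE i j k : (level i j <= k) = (i %/ 2 ^ k == j %/ 2 ^ k).
Proof.
rewrite /level; case: ex_minnP => l Hl Hmin; apply/idP/idP; last exact: Hmin.
by move=> lk; rewrite -(subnKC lk) expnD !divnMA (eqP Hl).
Qed.

Lemma levelC i j : level i j = level j i.
Proof. by apply/eqP; rewrite eqn_leq !level_leqE; apply/andP; split; rewrite eq_sym -level_leqE. Qed.

Lemma levelii i : level i i = 0.
Proof. by apply/eqP; rewrite -leqn0 level_leqE. Qed.

Lemma lg_exp2 m : lg (2 ^ m) = m.
Proof. by rewrite /lg trunc_expnK. Qed.

Local Open Scope ring_scope.

Section TreeMatrix.
Variables (R : rcfType) (m : nat).
Local Notation n := (2 ^ m)%N.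
Local Notation TM := (treeMatrix R n).

Lemma treeMatrixE (i j : 'I_n) :
  TM i j = \sum_(0 <= k < m) ((i %/ 2 ^ k == j %/ 2 ^ k)%N : nat)%:R.
Proof.
rewrite mxE lg_exp2 -sum_nat_leq natr_sum; apply: eq_bigr => k _.
by rewrite level_leqE.
Qed.

Lemma treeMatrix_sym : TM^T = TM.
Proof. by apply/matrixP => i j; rewrite !mxE levelC. Qed.

Lemma treeMatrix_mxtrace : \tr TM = (n * m)%N%:R.
Proof.
rewrite /mxtrace (eq_bigr (fun _ => m%:R)); last by move=> i _; rewrite mxE levelii lg_exp2 subn0.
by rewrite sumr_const card_ord -(mulr_natl (m%:R : R) n) -natrM.
Qed.

Definition blocksum (g : 'I_n -> R) k b : R :=
  \sum_(j < n) ((j %/ 2 ^ k == b)%N : nat)%:R * g j.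

Lemma blocksum0 (g : 'I_n -> R) (i : 'I_n) : blocksum g 0 i = g i.
Proof.
rewrite /blocksum (bigD1 i) //= expn0 divn1 eqxx mul1r big1 ?addr0 // => j ne.
by rewrite divn1 (_ : (j == i :> nat) = false) ?mul0r //; apply/negbTE.
Qed.

Lemma treeMatrix_quadE (g : 'I_n -> R) :
  \sum_(j < n) \sum_(l < n) g j * TM j l * g l =
  \sum_(0 <= k < m) \sum_(0 <= b < n) blocksum g k b ^+ 2.
Proof.
under eq_bigr => j _ do under eq_bigr => l _ do rewrite treeMatrixE mulr_sumr mulr_suml.
under eq_bigr => j _ do rewrite exchange_big /=.
rewrite exchange_big /=; apply: eq_bigr => k _.
have sqE b : blocksum g k b ^+ 2 = \sum_(j < n) \sum_(l < n)
    ((j %/ 2 ^ k == b)%N : nat)%:R * ((l %/ 2 ^ k == b)%N : nat)%:R * (g j * g l).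
  rewrite expr2 /blocksum mulr_suml; apply: eq_bigr => j _.
  by rewrite mulr_sumr; apply: eq_bigr => l _; ring.
rewrite (eq_bigr _ (fun b _ => sqE b)) [RHS]exchange_big /=; apply: eq_bigr => j _.
rewrite [RHS]exchange_big /=; apply: eq_bigr => l _.
have jn : (j %/ 2 ^ k < n)%N by apply: leq_ltn_trans (leq_div _ _) (ltn_ord j).
rewrite (sumr_nat_only jn) => [|b _ /negbTE jb]; last by rewrite eq_sym jb !mul0r.
by rewrite eqxx eq_sym mul1r; ring.
Qed.

Lemma treeMatrix_posdef : (0 < m)%N -> posdef TM.
Proof.
move=> m0; split=> [|X nz]; first exact: treeMatrix_sym.
have [i Xi] : exists i, X i 0 != 0.
  apply/existsP; move: nz; apply: contraR; rewrite negb_exists => /forallP X0.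
  by apply/eqP/matrixP => i j; rewrite (ord1 j) mxE; apply/eqP/negPn.
rewrite mxquadE treeMatrix_quadE.
have sq_ge0 k b : 0 <= blocksum (fun j => X j 0) k b ^+ 2 by rewrite sqr_ge0.
apply: lt_le_trans (ler_sum_nat_term m0 (fun k => sumr_ge0 _ (fun b _ => sq_ge0 k b))).
apply: lt_le_trans (ler_sum_nat_term (ltn_ord i) (sq_ge0 0%N)).
by rewrite blocksum0 lt0r sqr_ge0 andbT sqrf_eq0.
Qed.

Section PrefixSum.
Variables (g : 'I_n -> R) (p : nat).

Let bsum_sqr k := \sum_(0 <= b < n) blocksum g k b ^+ 2.

Lemma bsum_sqr_ge0 k : 0 <= bsum_sqr k.
Proof. by apply: sumr_ge0 => b _; rewrite sqr_ge0. Qed.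

Definition blocks_before k : R :=
  \sum_(j < n) ((j %/ 2 ^ k < p %/ 2 ^ k)%N : nat)%:R * g j.

Lemma blocks_before_diff k :
  blocks_before k - blocks_before k.+1 =
  (odd (p %/ 2 ^ k) : nat)%:R * blocksum g k (p %/ 2 ^ k).-1.
Proof.
rewrite /blocks_before -sumrB /blocksum mulr_sumr; apply: eq_bigr => j _.
by rewrite expnSr !divnMA ltn_halfE natrD natrM; ring.
Qed.

Lemma sqr_blocks_before_diff_le k : (p <= n)%N ->
  (blocks_before k - blocks_before k.+1) ^+ 2 <= bsum_sqr k.
Proof.
move=> pn; rewrite blocks_before_diff; case pk_odd: (odd (p %/ 2 ^ k))%N => /=; last first.
  by rewrite mul0r expr0n bsum_sqr_ge0.
rewrite mul1r /bsum_sqr.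
apply: (ler_sum_nat_term (f := fun b => blocksum g k b ^+ 2)) => [|b]; last exact: sqr_ge0.
have : (0 < p %/ 2 ^ k <= p)%N by rewrite leq_div odd_gt0 ?pk_odd.
lia.
Qed.

Lemma sqr_prefix_sum_lt : (p < n)%N ->
  (\sum_(j < n) ((j < p)%N : nat)%:R * g j) ^+ 2 <= m%:R * \sum_(0 <= k < m) bsum_sqr k.
Proof.
move=> pn'; have -> : \sum_(j < n) ((j < p)%N : nat)%:R * g j = blocks_before 0.
  by apply: eq_bigr => j _; rewrite expn0 !divn1.
have -> : blocks_before 0 = \sum_(0 <= k < m) (blocks_before k - blocks_before k.+1).
  rewrite sumr_telescope [blocks_before m]big1 ?subr0 // => j _.
  by rewrite (divn_small pn') ltn0 mul0r.
apply: le_trans (sqr_sumr_le _ _) _; apply: ler_wpM2l; first exact: ler0n.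
by apply: ler_sum_nat => k _; apply: sqr_blocks_before_diff_le; exact: ltnW.
Qed.

End PrefixSum.

Hypothesis m2 : (2 <= m)%N.

Lemma sqr_total_sum_le (g : 'I_n -> R) :
  (\sum_(j < n) g j) ^+ 2 <= m%:R * \sum_(0 <= k < m) \sum_(0 <= b < n) blocksum g k b ^+ 2.
Proof.
have n2 : (2 <= n)%N by rewrite -[2%N]/(2 ^ 1)%N leq_exp2l //; lia.
have -> : \sum_(j < n) g j = blocksum g m.-1 0 + blocksum g m.-1 1.
  rewrite /blocksum -big_split /=; apply: eq_bigr => j _.
  have : (j %/ 2 ^ m.-1 < 2)%N.
    by rewrite ltn_divLR ?expn_gt0 // -expnS prednK ?ltn_ord //; lia.
  by case: (j %/ 2 ^ m.-1)%N => [|[|]] //= _; ring.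
set a := blocksum g m.-1 0; set b := blocksum g m.-1 1.
have ab : (a + b) ^+ 2 <= m%:R * (a ^+ 2 + b ^+ 2).
  have : (2 : R) <= m%:R by rewrite (ler_nat R 2 m).
  have : 0 <= (a - b) ^+ 2 by rewrite sqr_ge0.
  have : 0 <= a ^+ 2 + b ^+ 2 by rewrite addr_ge0 ?sqr_ge0.
  nra.
apply: le_trans ab _; apply: ler_wpM2l; first exact: ler0n.
have sq_ge0 k c : 0 <= blocksum g k c ^+ 2 by rewrite sqr_ge0.
have mm : (m.-1 < m)%N by lia.
apply: le_trans (ler_sum_nat_term mm (fun k => sumr_ge0 _ (fun c _ => sq_ge0 k c))).
by rewrite big_ltn ?(leq_trans _ n2) // big_ltn // addrA lerDl sumr_ge0.
Qed.

(* With [z = TM^-1 v], both [v^T z] and [z^T TM z] equal [v^T TM^-1 v]. *)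
Lemma treeMatrix_invmx_quad_le p : (0 < p)%N -> (p <= n)%N ->
  ((vvec R n p)^T *m invmx TM *m vvec R n p) 0 0 <= m%:R.
Proof.
move=> p0 pn; have posTM : posdef TM by apply: treeMatrix_posdef; lia.
set v := vvec R n p; set z := invmx TM *m v; set q := (v^T *m invmx TM *m v) 0 0.
have TMz : TM *m z = v by rewrite /z mulmxA mulmxV ?mul1mx // posdef_unitmx.
have qE : q = (z^T *m v) 0 0 by rewrite -trmx11 trmx_mul trmxK /q /z mulmxA.
have q_prefix : q = \sum_(j < n) ((j < p)%N : nat)%:R * z j 0.
  by rewrite qE mxE; apply: eq_bigr => j _; rewrite !mxE mulrC; case: (j < p)%N.
have q_blocks : q = \sum_(0 <= k < m) \sum_(0 <= b < n) blocksum (fun j => z j 0) k b ^+ 2.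
  by rewrite qE -TMz mulmxA mxquadE treeMatrix_quadE.
have : q ^+ 2 <= m%:R * q.
  rewrite {1}q_prefix q_blocks; have [pn'|] := ltnP p n; first exact: sqr_prefix_sum_lt.
  move=> np; have -> : p = n by apply/eqP; rewrite eqn_leq pn np.
  under eq_bigr => j _ do rewrite ltn_ord mul1r.
  exact: sqr_total_sum_le.
have : 0 <= m%:R :> R by [].
nra.
Qed.

Lemma treeMatrix_maxquad_le : maxquad TM <= m%:R.
Proof.
rewrite /maxquad; elim/big_ind: _ => // [x y xm ym|i _]; first by rewrite ge_max xm ym.
exact: treeMatrix_invmx_quad_le.
Qed.

Lemma treeMatrix_tr_mul_maxquad_le : \tr TM * maxquad TM <= (n * lg n ^ 2)%N%:R.
Proof.
rewrite treeMatrix_mxtrace lg_exp2 -[(m ^ 2)%N]/(m * m)%N mulnA [X in _ <= X]natrM.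
by apply: ler_wpM2l; [exact: ler0n | exact: treeMatrix_maxquad_le].
Qed.

End TreeMatrix.

Theorem corollary3p3 :
  (exists c : rat, 0 < c /\
     forall (R : rcfType) (n : nat) (A : 'M[R]_n),
       (exists m : nat, n = (4 ^ m)%N) -> (4 <= n)%N -> posdef A ->
       ratr c * (n * lg n ^ 2)%N%:R <= \tr A * maxquad A)
  /\
  (forall (R : rcfType) (n : nat),
       (exists m : nat, n = (2 ^ m)%N) -> (4 <= n)%N ->
       \tr (treeMatrix R n) * maxquad (treeMatrix R n) <= (n * lg n ^ 2)%N%:R).
Proof.
have ge2 k : (4 <= 2 ^ k)%N -> (2 <= k)%N by rewrite -(@leq_exp2l 2 2).
split=> [|R n [m ->] /ge2]; last exact: treeMatrix_tr_mul_maxquad_le.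
exists 512%:R^-1; split=> [|R n A [m En]]; first by rewrite invr_gt0 ltr0n.
have e : (4 ^ m = 2 ^ (2 * m))%N by rewrite expnM.
subst n; move: A; rewrite e => A /ge2 m2 posA.
by rewrite fmorphV rmorph_nat lg_exp2 tr_mul_maxquad_ge.
Qed.
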